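(* There is an absolute constant $C$ such that for all positive integers $n$, $$s(n)\le 2^{2n+C}\sum_{a,b,c\in[n]}2^{-|c-(a+b)|}\,g(c-(a+b)-1).$$
   Context: $[n]=\{1,\dots,n\}$, $[n]_0=\{0,1,\dots,n\}$. $s(n)$ is the number of sum-free subsets (no $a,b,c$, not necessarily distinct, with $a+b=c$, coordinatewise addition) of $\{1,3,4\}\times[n]\subset\mathbb{Z}^2$. The function $g:\mathbb{Z}\to\mathbb{R}$ is defined for positive integers $m$ by $$g(m)=\sum 2^{-|(S_1+S_2)\cap[m]_0|},$$ the sum over all pairs of sets $S_1,S_2\subseteq[m]_0$ with $0\in S_1$, $0\in S_2$ and $m+1\notin S_1+S_2$ (where $S_1+S_2=\{u+v:u\in S_1,v\in S_2\}$), and $g(m)=1$ for integers $m\le0$. *)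

From HB Require Import structures.
From mathcomp Require Import all_boot all_order all_algebra.
Set Implicit Arguments. Unset Strict Implicit. Unset Printing Implicit Defensive.
Import Order.TTheory GRing.Theory Num.Theory.

Definition xcoord (i : 'I_3) : nat :=
  match val i with 0 => 1 | 1 => 3 | _ => 4 end.

(* The point of {1,3,4} x [n] encoded by (i, j) : 'I_3 * 'I_n is
   (xcoord i, j + 1). *)
Definition grid_pt (n : nat) (p : 'I_3 * 'I_n) : nat * nat :=
  (xcoord p.1, (val p.2).+1).

Definition sum_free (n : nat) (A : {set 'I_3 * 'I_n}) : bool :=
  [forall a in A, forall b in A, forall c in A,
     ((grid_pt a).1 + (grid_pt b).1 != (grid_pt c).1)
     || ((grid_pt a).2 + (grid_pt b).2 != (grid_pt c).2)].

Definition s (n : nat) : nat := #|[set A : {set 'I_3 * 'I_n} | sum_free A]|.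

Definition in_sumset (m : nat) (S1 S2 : {set 'I_m.+1}) (k : nat) : bool :=
  [exists u in S1, exists v in S2, (val u + val v == k)%N].

Definition g_pos (m : nat) : rat :=
  \sum_(S1 : {set 'I_m.+1})
   \sum_(S2 : {set 'I_m.+1} | (ord0 \in S1) && (ord0 \in S2) &&
                              ~~ in_sumset S1 S2 m.+1)
     ((2%:R : rat) ^- #|[set k : 'I_m.+1 | in_sumset S1 S2 (val k)]|)%R.

Definition g (m : int) : rat :=
  if (m <= 0)%R then 1%R else g_pos (absz m).

Definition term (a b c : nat) : rat :=
  let k : int := (c%:Z - (a + b)%:Z)%R in
  ((2%:R : rat) ^- absz k * g (k - 1))%R.

From mathcomp Require Import all_boot all_order all_algebra.
From mathcomp Require Import zify ring lra.
Set Implicit Arguments. Unset Strict Implicit. Unset Printing Implicit Defensive.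
Import Order.TTheory GRing.Theory Num.Theory.
Local Open Scope ring_scope.

(* Split a subset of {1,3,4} x [n] into its columns A1, A3, A4.  Since
   1 + 3 = 4, sum-freeness forces A4 to avoid A1 + A3, so s(n) is at most the
   sum of 2^(n - |(A1 + A3) ∩ [n]|) over all pairs (A1, A3).  Pairs with an
   empty member contribute O(4^n).  Otherwise let a = min A1, b = min A3, so
   a + b ∈ A1 + A3.  If A1 + A3 contains all of [n] above a + b, the pair has
   weight at most 2^(a+b) and there are at most 2^(2n-a-b) such pairs.  If
   not, let c be the largest element of [n] outside A1 + A3.  The windows
   S1 = (A1 - a) ∩ [c-a-b-1]_0 and S2 = (A3 - b) ∩ [c-a-b-1]_0 contain 0,
   c - a - b ∉ S1 + S2, and A1 + A3 contains a + b + (S1 + S2) besides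
   everything above c; the parts of A1 and A3 above their windows are free.
   Summing over the windows yields the g(c - (a + b) - 1) of the bound. *)

Section SumBounds.

Variable R : numDomainType.

Lemma ler_sum_term (I : finType) (P : pred I) (F : I -> R) (i : I) :
  P i -> (forall j, P j -> 0 <= F j) -> F i <= \sum_(j | P j) F j.
Proof. by move=> Pi F0; rewrite (bigD1 i) //= lerDl sumr_ge0 // => j /andP[/F0]. Qed.

Lemma ler_sum_card (I : finType) (P : pred I) (F : I -> R) (B : R) :
  (forall i, P i -> F i <= B) -> \sum_(i | P i) F i <= #|P|%:R * B.
Proof. by move=> FB; rewrite mulr_natl -sumr_const; apply: ler_sum. Qed.

Lemma ler_sum_cover (I J : finType) (P : pred I) (Q : J -> pred I) (F : I -> R) :
  (forall i, P i -> exists j, Q j i) -> (forall i, 0 <= F i) ->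
  \sum_(i | P i) F i <= \sum_j \sum_(i | Q j i) F i.
Proof.
move=> PQ F0; rewrite (exchange_big_dep predT) //= [X in _ <= X](bigID P) /=.
rewrite -[X in X <= _]addr0 lerD ?sumr_ge0 // => [|i _]; last exact: sumr_ge0.
apply: ler_sum => i Pi; have [j Qji] := PQ i Pi.
by rewrite (bigD1 j) //= lerDl sumr_ge0.
Qed.

Lemma ler_sum_fibers (I J : finType) (P : pred I) (Q : pred J) (phi : I -> J)
    (F : I -> R) (G M : J -> R) :
  (forall i, P i -> Q (phi i)) -> (forall i, P i -> F i <= G (phi i)) ->
  (forall j, Q j -> 0 <= G j) ->
  (forall j, Q j -> #|[pred i | P i & phi i == j]|%:R <= M j) ->
  \sum_(i | P i) F i <= \sum_(j | Q j) G j * M j.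
Proof.
move=> PQ FG G0 card_fiber.
apply: le_trans (_ : \sum_(i | P i) G (phi i) <= _); first exact: ler_sum.
rewrite (partition_big phi Q) //=; apply: ler_sum => j Qj.
rewrite (eq_bigr (fun=> G j)) => [|i /andP[_ /eqP <-] //].
by rewrite sumr_const -mulr_natr ler_wpM2l ?G0 ?card_fiber.
Qed.

End SumBounds.

Lemma ler_pow2_invr (R : numFieldType) (e f d : nat) :
  (e + d <= f)%N -> (2%:R : R) ^+ e <= 2%:R ^+ f * 2%:R ^- d.
Proof.
move=> edf; rewrite ler_pdivlMr ?exprn_gt0 ?ltr0n // -exprD.
by rewrite ler_eXn2l ?ltr1n.
Qed.

Lemma card_ord_bounded n (A : {pred 'I_n}) (s : nat) :
  {in A, forall w : 'I_n, w < s}%N -> (#|A| <= s)%N.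
Proof.
move=> As; rewrite cardE -(size_map val) -[s](size_iota 0).
apply: uniq_leq_size; first by rewrite map_inj_uniq ?enum_uniq //; apply: val_inj.
by move=> _ /mapP[w wA ->]; rewrite mem_iota /= As // -mem_enum.
Qed.

Lemma card_set_ord k : #|{: {set 'I_k}}| = (2 ^ k)%N.
Proof. by rewrite -cardsT -powersetT card_powerset cardsT card_ord. Qed.

(* The ordinals ['I_n] stand for [n] through [j |-> j + 1], as in [grid_pt];
   thus [sumset A B] is (A + B) ∩ [n]. *)
Definition sumset n (A B : {set 'I_n}) : {set 'I_n} :=
  [set w : 'I_n | [exists u in A, exists v in B, (u + v).+1 == w :> nat]].

Lemma mem_sumset n (A B : {set 'I_n}) (u v w : 'I_n) :
  u \in A -> v \in B -> w = (u + v)%N.+1 :> nat -> w \in sumset A B.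
Proof.
move=> uA vB wE; rewrite inE; apply/exists_inP; exists u => //.
by apply/exists_inP; exists v; rewrite // wE.
Qed.

Definition weight n (x : {set 'I_n} * {set 'I_n}) : rat :=
  2%:R ^+ #|~: sumset x.1 x.2|.

Lemma weight_ge0 n (x : {set 'I_n} * {set 'I_n}) : 0 <= weight x.
Proof. exact: exprn_ge0. Qed.

Lemma weight_le n (x : {set 'I_n} * {set 'I_n}) : weight x <= 2%:R ^+ n.
Proof. by rewrite ler_eXn2l ?ltr1n // -[X in (_ <= X)%N](card_ord n) max_card. Qed.

(* [xcoord x1 = 1], [xcoord x3 = 3] and [xcoord x4 = 4]. *)
Definition x1 : 'I_3 := @Ordinal 3 0 isT.
Definition x3 : 'I_3 := @Ordinal 3 1 isT.
Definition x4 : 'I_3 := @Ordinal 3 2 isT.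

Definition column n (i : 'I_3) (A : {set 'I_3 * 'I_n}) : {set 'I_n} :=
  [set j | (i, j) \in A].

Lemma column_inj n (A B : {set 'I_3 * 'I_n}) :
  column x1 A = column x1 B -> column x3 A = column x3 B ->
  column x4 A = column x4 B -> A = B.
Proof.
move=> e1 e3 e4; apply/setP => -[i j].
suff: column i A = column i B by move/setP/(_ j); rewrite !inE.
case: i => -[|[|[|//]]] i_lt.
- by rewrite (_ : Ordinal i_lt = x1) //; apply: val_inj.
- by rewrite (_ : Ordinal i_lt = x3) //; apply: val_inj.
- by rewrite (_ : Ordinal i_lt = x4) //; apply: val_inj.
Qed.

Lemma sum_free_column n (A : {set 'I_3 * 'I_n}) :
  sum_free A -> column x4 A \subset ~: sumset (column x1 A) (column x3 A).
Proof.
move=> /forall_inP sfA; apply/subsetP => w; rewrite !inE => Aw.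
apply/existsP => -[u /andP[]]; rewrite inE => Au.
case/exists_inP => v; rewrite inE => Av /eqP uvw.
move: sfA => /(_ _ Au)/forall_inP/(_ _ Av)/forall_inP/(_ _ Aw).
by rewrite /grid_pt /= -uvw addnS addSn !eqxx.
Qed.

Lemma card_sum_free_fiber n (x : {set 'I_n} * {set 'I_n}) :
  (#|[pred A | sum_free A & (column x1 A, column x3 A) == x]|
     <= 2 ^ #|~: sumset x.1 x.2|)%N.
Proof.
rewrite -card_powerset -(card_in_imset (f := column x4)).
  apply: subset_leq_card; apply/subsetP => _ /imsetP[A /andP[sfA /eqP <-] ->].
  by rewrite inE sum_free_column.
move=> A B /andP[_ /eqP eA] /andP[_ /eqP eB] e4; rewrite -eB in eA.
by case: eA => e1 e3; apply: column_inj.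
Qed.

Lemma s_le_sum_weight n :
  ((s n)%:R : rat) <= \sum_(x : {set 'I_n} * {set 'I_n}) weight x.
Proof.
rewrite /s -sum1dep_card.
rewrite (partition_big (fun A => (column x1 A, column x3 A)) predT) //= natr_sum.
apply: ler_sum => x _; rewrite sum1_card /weight -natrX ler_nat.
exact: card_sum_free_fiber.
Qed.

Definition window n k (a : nat) (A : {set 'I_n}) : {set 'I_k} :=
  [set i : 'I_k | (a + i)%N \in [seq val u | u in A]].

Lemma windowP n k a (A : {set 'I_n}) (i : 'I_k) :
  reflect (exists2 w : 'I_n, w \in A & w = (a + i)%N :> nat) (i \in window k a A).
Proof. by rewrite inE; apply: (iffP imageP) => -[w wA e]; exists w. Qed.

Lemma mem_window n k a (A : {set 'I_n}) (i : 'I_k) (w : 'I_n) :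
  w = (a + i)%N :> nat -> (i \in window k a A) = (w \in A).
Proof. by move=> e; rewrite inE -e mem_image //; apply: val_inj. Qed.

Lemma window1 n (a : 'I_n) (A : {set 'I_n}) : a \in A -> window 1 a A = [set ord0].
Proof.
move=> aA; apply/setP => i; rewrite ord1 in_set1 eqxx.
by rewrite (mem_window A (_ : val a = a + @ord0 0)%N) ?addn0.
Qed.

Lemma eq_set_windows n (a k : nat) (A B : {set 'I_n}) :
  {in A, forall u : 'I_n, a <= u}%N -> {in B, forall u : 'I_n, a <= u}%N ->
  window k a A = window k a B ->
  window (n - (a + k)) (a + k) A = window (n - (a + k)) (a + k) B -> A = B.
Proof.
move=> geA geB eqlo eqhi; apply/setP => w.
case: (ltnP w a) => [wa|aw].
  by apply/idP/idP => [/geA|/geB]; rewrite leqNgt wa.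
case: (ltnP w (a + k)) => [wak|akw].
  have i_lt : (w - a < k)%N by lia.
  have wE : w = (a + Ordinal i_lt)%N :> nat by rewrite /= subnKC.
  by rewrite -(mem_window A wE) -(mem_window B wE) eqlo.
have i_lt : (w - (a + k) < n - (a + k))%N by have := ltn_ord w; lia.
have wE : w = (a + k + Ordinal i_lt)%N :> nat by rewrite /= subnKC.
by rewrite -(mem_window A wE) -(mem_window B wE) eqhi.
Qed.

Lemma card_window_fiber n (a k : nat) (W : {set 'I_k}) :
  (#|[pred A : {set 'I_n} | [forall u in A, a <= u] & window k a A == W]|
     <= 2 ^ (n - (a + k)))%N.
Proof.
rewrite -card_set_ord; apply: (@leq_card_in _ _ (window (n - (a + k)) (a + k))).
move=> A B /andP[/forall_inP geA /eqP eA] /andP[/forall_inP geB /eqP eB].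
by apply: eq_set_windows geA geB _; rewrite eA eB.
Qed.

Lemma in_sumset_window n m a b (A B : {set 'I_n}) (i : nat) (w : 'I_n) :
  in_sumset (window m.+1 a A) (window m.+1 b B) i -> w = (a + b + i)%N.+1 :> nat ->
  w \in sumset A B.
Proof.
case/exists_inP => u /windowP[u' u'A u'E] /exists_inP[v /windowP[v' v'B v'E] /eqP uvi] wE.
by apply: (mem_sumset u'A v'B); rewrite wE u'E v'E -uvi addnACA.
Qed.

Definition minima n (a b : 'I_n) (x : {set 'I_n} * {set 'I_n}) : bool :=
  [&& a \in x.1, [forall u in x.1, a <= u]%N, b \in x.2 & [forall v in x.2, b <= v]%N].

Lemma card_minima_windows n (a b : 'I_n) k (y : {set 'I_k} * {set 'I_k}) :
  (#|[pred x | minima a b x & (window k a x.1, window k b x.2) == y]|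
     <= 2 ^ (n - (a + k)) * 2 ^ (n - (b + k)))%N.
Proof.
pose fiber c (W : {set 'I_k}) :=
  [pred A : {set 'I_n} | [forall u in A, c <= u]%N & window k c A == W].
apply: (@leq_trans #|[predX fiber a y.1 & fiber b y.2]|).
  apply: subset_leq_card; apply/subsetP => -[A B].
  by rewrite !inE /= => /andP[/and4P[_ -> _ ->] /eqP <-]; rewrite !eqxx.
by rewrite cardX leq_mul ?card_window_fiber.
Qed.

Definition saturated n (s : nat) (S : {set 'I_n}) : bool :=
  [forall w : 'I_n, (s <= w)%N ==> (w \in S)].

Definition top_gap n (s : nat) (S : {set 'I_n}) (c : 'I_n) : bool :=
  [&& s <= c, c \notin S & [forall w : 'I_n, (c < w) ==> (w \in S)]]%N.

Lemma top_gapP n s (S : {set 'I_n}) : ~~ saturated s S -> exists c, top_gap s S c.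
Proof.
case/forallPn => w; rewrite negb_imply => /andP[sw wS].
pose gap := [pred c : 'I_n | (s <= c)%N && (c \notin S)].
case: (@arg_maxnP _ w gap val); first by rewrite inE sw.
move=> c /andP[sc cS] cmax; exists c; rewrite /top_gap sc cS /=.
apply/forall_inP => v cv; apply/negPn/negP => vS.
move: (cmax v); rewrite inE (leq_trans sc (ltnW cv)) vS => /(_ isT).
by rewrite /= leqNgt cv.
Qed.

Lemma card_compl_saturated n s (S : {set 'I_n}) :
  saturated s S -> (#|~: S| <= minn s n)%N.
Proof.
move=> /forallP satS; rewrite leq_min; apply/andP; split; last first.
  by apply: leq_trans (max_card _) _; rewrite card_ord.
apply: card_ord_bounded => w; rewrite inE; apply: contraR; rewrite -leqNgt => sw.
by have := satS w; rewrite sw.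
Qed.

Lemma g_ge0 m : 0 <= g m.
Proof.
rewrite /g; case: ifP => // _.
by apply: sumr_ge0 => S1 _; apply: sumr_ge0 => S2 _; rewrite invr_ge0 exprn_ge0.
Qed.

Lemma term_ge0 a b c : 0 <= term a b c.
Proof. by rewrite mulr_ge0 ?g_ge0 // invr_ge0 exprn_ge0. Qed.

Lemma termE_le a b c : (c <= a + b)%N -> term a b c = 2%:R ^- (a + b - c).
Proof.
move=> cab; rewrite /term -opprB subzn // abszN absz_nat /g ifT ?mulr1 //.
by rewrite lerBlDr add0r (le_trans _ (ler0n _ 1)) // oppr_le0.
Qed.

Lemma termE_gt a b m : term a b (a + b + m.+1) = 2%:R ^- m.+1 * g m.
Proof.
rewrite /term PoszD addrAC subrr add0r absz_nat; congr (_ * g _).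
by rewrite intS addrAC subrr add0r.
Qed.

Definition g_admissible m (y : {set 'I_m.+1} * {set 'I_m.+1}) : bool :=
  [&& ord0 \in y.1, ord0 \in y.2 & ~~ in_sumset y.1 y.2 m.+1].

Definition g_weight m (y : {set 'I_m.+1} * {set 'I_m.+1}) : rat :=
  2%:R ^- #|[set k : 'I_m.+1 | in_sumset y.1 y.2 k]|.

Lemma g_weight_ge0 m (y : {set 'I_m.+1} * {set 'I_m.+1}) : 0 <= g_weight y.
Proof. by rewrite invr_ge0 exprn_ge0. Qed.

(* For [m = 0] the definition of [g] forgets the sum and sets [g 0 = 1], which
   still dominates the sum up to the number [4] of pairs. *)
Lemma sum_g_weight_le m :
  \sum_(y | g_admissible y) @g_weight m y <= 2%:R ^+ 2 * g m.
Proof.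
case: m => [|m].
  rewrite /g /= mulr1; apply: le_trans (ler_sum_card (B := 1) _) _.
    by move=> y _; rewrite invf_le1 ?exprn_gt0 // exprn_ege1 // ler1n.
  rewrite mulr1 -natrX ler_nat; apply: leq_trans (max_card _) _.
  by rewrite card_prod card_set_ord.
rewrite /g /= /g_pos pair_big_dep /= -[X in X <= _]mul1r.
apply: ler_pM; rewrite ?exprn_ege1 ?ler1n ?sumr_ge0 //.
  by move=> y _; apply: g_weight_ge0.
by rewrite le_eqVlt (eq_bigl _ _ (fun y => andbA _ _ _)) eqxx.
Qed.

Lemma window_gap_admissible n (a b c : 'I_n) m (x : {set 'I_n} * {set 'I_n}) :
  minima a b x -> c \notin sumset x.1 x.2 -> c = (a + b + m)%N.+2 :> nat ->
  g_admissible (window m.+1 a x.1, window m.+1 b x.2).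
Proof.
case/and4P => ax _ bx _ cS cE; rewrite /g_admissible /=.
rewrite (mem_window _ (_ : val a = a + @ord0 m)%N) ?addn0 //.
rewrite (mem_window _ (_ : val b = b + @ord0 m)%N) ?addn0 // ax bx /=.
by apply: contra cS => /in_sumset_window; apply; rewrite cE addnS.
Qed.

(* The complement of [sumset] lies below [c] and misses the shift by
   [a + b + 1] of the sumset of the windows. *)
Lemma weight_gap_le n (a b c : 'I_n) m (x : {set 'I_n} * {set 'I_n}) :
  [forall w : 'I_n, (c < w)%N ==> (w \in sumset x.1 x.2)] ->
  c = (a + b + m)%N.+2 :> nat ->
  weight x <= 2%:R ^+ c.+1 * g_weight (window m.+1 a x.1, window m.+1 b x.2).
Proof.
move=> /forall_inP above cE; rewrite /weight /g_weight /=.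
set P := [set k : 'I_m.+1 | in_sumset _ _ k].
have shift_lt (k : 'I_m.+1) : ((a + b + k).+1 < n)%N.
  by have := ltn_ord c; have := ltn_ord k; lia.
pose shift (k : 'I_m.+1) : 'I_n := Ordinal (shift_lt k).
have shift_inj : injective shift.
  by move=> k l /(congr1 val) /= e; apply: val_inj => /=; lia.
have shiftP_sub : shift @: P \subset sumset x.1 x.2.
  apply/subsetP => _ /imsetP[k kP ->]; rewrite inE in kP.
  exact: (in_sumset_window kP).
have disj : ~: sumset x.1 x.2 :&: shift @: P = set0.
  apply/setP => w; rewrite in_setI in_setC in_set0 andbC.
  by case: (boolP (w \in shift @: P)) => // /(subsetP shiftP_sub) ->.
have card_le : (#|~: sumset x.1 x.2| + #|P| <= c.+1)%N.
  rewrite -(card_imset P shift_inj) -cardsUI disj cards0 addn0.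
  apply: card_ord_bounded => w; rewrite in_setU inE => /orP[wS|/imsetP[k _ ->]].
    by rewrite ltnS leqNgt; apply: contra wS; apply: above.
  by rewrite /= cE; have := ltn_ord k; lia.
exact: ler_pow2_invr.
Qed.

Lemma sum_weight_empty n :
  \sum_(x | (x.1 == set0) || (x.2 == set0)) @weight n x <= 2%:R ^+ (2 * n).+1.
Proof.
apply: le_trans (ler_sum_card (fun x _ => weight_le x)) _.
have card_empty :
    (#|[pred x : {set 'I_n} * {set 'I_n} | (x.1 == set0) || (x.2 == set0)]|
       <= 2 ^ n + 2 ^ n)%N.
  apply: (@leq_trans #|setX [set set0] setT :|: setX setT [set set0]|).
    by apply: subset_leq_card; apply/subsetP => -[A B]; rewrite !inE /= !andbT.
  by rewrite cardsU !cardsX !cards1 cardsT card_set_ord mul1n muln1 leq_subr.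
rewrite -!natrX -natrM ler_nat (leq_trans (leq_mul card_empty (leqnn _))) //.
by rewrite addnn -mul2n -expnS -expnD mul2n -addnn addSn.
Qed.

Lemma sum_weight_saturated n (a b c : 'I_n) : c = minn (a + b).+1 n.-1 :> nat ->
  \sum_(x | minima a b x && saturated (a + b).+1 (sumset x.1 x.2)) weight x
    <= 2%:R ^+ (2 * n).+1 * term a.+1 b.+1 c.+1.
Proof.
move=> cE.
apply: le_trans (ler_sum_card (B := 2%:R ^+ minn (a + b).+1 n) _) _.
  by move=> x /andP[_ /card_compl_saturated sat]; rewrite ler_eXn2l ?ltr1n.
have card_min :
    (#|[pred x | minima a b x && saturated (a + b).+1 (sumset x.1 x.2)]|
       <= 2 ^ (n - a.+1) * 2 ^ (n - b.+1))%N.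
  rewrite -(addn1 a) -(addn1 b).
  apply: leq_trans (card_minima_windows a b ([set ord0], [set ord0])).
  apply: subset_leq_card; apply/subsetP => x; rewrite !inE => /andP[mx _].
  by case/and4P: (mx) => ax _ bx _; rewrite mx /= !window1.
apply: le_trans (ler_wpM2r (exprn_ge0 _ (ler0n _ 2))
  (_ : _ <= (2 ^ (n - a.+1) * 2 ^ (n - b.+1))%N%:R)) _; first by rewrite ler_nat.
rewrite natrM !natrX -!exprD termE_le; last by rewrite cE; lia.
by apply: ler_pow2_invr; have := ltn_ord a; have := ltn_ord b; lia.
Qed.

Lemma sum_weight_gap n (a b c : 'I_n) :
  \sum_(x | minima a b x && top_gap (a + b).+1 (sumset x.1 x.2) c) weight x
    <= 2%:R ^+ (2 * n + 4) * term a.+1 b.+1 c.+1.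
Proof.
have [c_le|ab_lt] := leqP c (a + b).+1.
  rewrite big_pred0 => [|x].
    exact: mulr_ge0 (exprn_ge0 _ (ler0n _ 2)) (term_ge0 _ _ _).
  apply/negP => /andP[/and4P[ax _ bx _] /and3P[abc cS _]].
  by move: cS; rewrite (mem_sumset ax bx) //; apply/eqP; rewrite eqn_leq abc c_le.
set m := (c - (a + b).+2)%N.
have cE : c = (a + b + m)%N.+2 :> nat by rewrite /m; lia.
pose M : rat := (2 ^ (n - (a + m.+1)) * 2 ^ (n - (b + m.+1)))%N%:R.
apply: le_trans (ler_sum_fibers (Q := @g_admissible m)
  (phi := fun x => (window m.+1 a x.1, window m.+1 b x.2))
  (G := fun y => 2%:R ^+ c.+1 * g_weight y) (M := fun=> M) _ _ _ _) _.
- by move=> x /andP[mx /and3P[_ cS _]]; apply: window_gap_admissible mx cS cE.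
- by move=> x /andP[_ /and3P[_ _ above]]; apply: weight_gap_le above cE.
- by move=> y _; rewrite mulr_ge0 ?exprn_ge0 ?g_weight_ge0.
- move=> y _; rewrite ler_nat; apply: leq_trans (card_minima_windows a b y).
  apply: subset_leq_card; apply/subsetP => x.
  by rewrite !inE => /andP[/andP[-> _] ->].
rewrite -mulr_suml -mulr_sumr.
apply: le_trans (ler_wpM2r _ (ler_wpM2l (exprn_ge0 _ (ler0n _ 2))
  (sum_g_weight_le m))) _; first by rewrite ler0n.
have -> : c.+1 = (a.+1 + b.+1 + m.+1)%N by rewrite cE; lia.
rewrite termE_gt /M natrM !natrX.
set e1 := (a.+1 + b.+1 + m.+1)%N.
set e2 := (n - (a + m.+1))%N; set e3 := (n - (b + m.+1))%N.
have -> : 2%:R ^+ e1 * (2%:R ^+ 2 * g m) * (2%:R ^+ e2 * 2%:R ^+ e3)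
          = 2%:R ^+ (e1 + 2 + e2 + e3) * g m :> rat by rewrite !exprD; ring.
rewrite mulrA ler_wpM2r ?g_ge0 //; apply: ler_pow2_invr.
by have := ltn_ord c; rewrite cE; lia.
Qed.

Lemma sum_weight_minima n (a b : 'I_n) :
  \sum_(x | minima a b x) weight x
    <= 2%:R ^+ (2 * n + 5) * \sum_(c < n) term a.+1 b.+1 c.+1.
Proof.
set T := \sum_(c < n) _.
have term_le_T (c : 'I_n) : term a.+1 b.+1 c.+1 <= T.
  by apply: ler_sum_term => // i _; apply: term_ge0.
have T_ge0 : 0 <= T by apply: le_trans (term_le_T a); apply: term_ge0.
have c_lt : (minn (a + b).+1 n.-1 < n)%N by have := ltn_ord a; lia.
rewrite (bigID (fun x => saturated (a + b).+1 (sumset x.1 x.2))) /=.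
apply: le_trans (lerD (sum_weight_saturated (c := Ordinal c_lt) erefl) _) _.
  apply: le_trans (ler_sum_cover (Q := fun c x =>
    minima a b x && top_gap (a + b).+1 (sumset x.1 x.2) c) _ (@weight_ge0 n)) _.
    by move=> x /andP[mx /top_gapP[c gap]]; exists c; rewrite mx.
  apply: le_trans (ler_sum _ (fun c _ => sum_weight_gap a b c)) _.
  by rewrite -mulr_sumr.
apply: le_trans (lerD (ler_wpM2l (exprn_ge0 _ (ler0n _ 2)) (term_le_T _)) (lexx _)) _.
rewrite -mulrDl ler_wpM2r // (addnS _ 4) (exprS _ (2 * n + 4)) mulr_natl mulr2n.
by rewrite lerD2r ler_eXn2l ?ltr1n //; lia.
Qed.

Lemma sum_weight_le n :
  \sum_(x : {set 'I_n} * {set 'I_n}) weight x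
    <= 2%:R ^+ (2 * n).+1 + 2%:R ^+ (2 * n + 5) *
         \sum_(a < n) \sum_(b < n) \sum_(c < n) term a.+1 b.+1 c.+1.
Proof.
rewrite (bigID (fun x => (x.1 == set0) || (x.2 == set0))) /= lerD ?sum_weight_empty //.
apply: le_trans (ler_sum_cover (J := ('I_n * 'I_n)%type)
  (Q := fun ab => minima ab.1 ab.2) _ (@weight_ge0 n)) _.
  move=> [A B]; rewrite negb_or => /andP[/set0Pn[u uA] /set0Pn[v vB]] /=.
  case: (arg_minnP val uA) => a aA amin; case: (arg_minnP val vB) => b bB bmin.
  by exists (a, b); apply/and4P; split=> //; apply/forall_inP.
rewrite -(pair_bigA _ (fun a b => \sum_(x | minima a b x) weight x)) /=.
rewrite mulr_sumr; apply: ler_sum => a _.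
by rewrite mulr_sumr; apply: ler_sum => b _; apply: sum_weight_minima.
Qed.

Lemma sum_term_ge_half n : (0 < n)%N ->
  2%:R^-1 <= \sum_(a < n) \sum_(b < n) \sum_(c < n) term a.+1 b.+1 c.+1.
Proof.
move=> n_gt0; pose i0 := Ordinal n_gt0.
have sum_ge0 a b : 0 <= \sum_(c < n) term a.+1 b.+1 c.+1.
  by apply: sumr_ge0 => c _; apply: term_ge0.
rewrite -[X in X <= _]expr1 -(termE_le (a := 1) (b := 1) (c := 1)) //.
apply: le_trans (ler_sum_term (i := i0) _ _) => // [|a _]; last first.
  by apply: sumr_ge0 => b _.
apply: le_trans (ler_sum_term (i := i0) _ _) => //.
by apply: (ler_sum_term (i := i0)) => // c _; apply: term_ge0.
Qed.

Theorem mainTheorem10 :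
  exists C : int, forall n : nat, (0 < n)%N ->
    ((s n)%:R : rat) <=
      (2%:R : rat) ^ (2 * n%:Z + C) *
      \sum_(a < n) \sum_(b < n) \sum_(c < n) term a.+1 b.+1 c.+1.
Proof.
exists 6 => n n_gt0.
have T_ge := sum_term_ge_half n_gt0.
rewrite (_ : 2 * n%:Z + 6 = (2 * n + 6)%N) ?PoszD ?PoszM // -exprnP.
apply: le_trans (s_le_sum_weight n) _; apply: le_trans (sum_weight_le n) _.
rewrite exprSr (exprD _ (2 * n) 5) (exprD _ (2 * n) 6) -!mulrA -mulrDr.
apply: ler_wpM2l; first exact: exprn_ge0.
lra.
Qed.
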